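(* Every bipartite graph $G$ is strongly $\Delta(G)$-edge-orientable.
   Context: An orientation of a graph $H$ is any digraph obtained by replacing each edge $uv$ with the arc $(u,v)$, with the arc $(v,u)$, or with both arcs. A kernel of a digraph $D$ is an independent set $S$ such that every vertex of $D-S$ has an out-neighbor in $S$. $D$ is kernel-perfect if every induced subdigraph of $D$ has a kernel. For $f:V(H)\to\mathbb{N}$, an orientation $D$ of $H$ is $f$-kernel-perfect if it is kernel-perfect and $f(v)\ge 1+d^+_D(v)$ for all $v$. For $f:E(G)\to\mathbb{N}$, $G$ is $f$-edge-orientable if its line graph $L(G)$ admits an $f$-kernel-perfect orientation. For $v\in V(G)$, define $f_{k,v}:E(G)\to\mathbb{N}$ by $f_{k,v}(e)=d_G(v)$ if $e$ is incident to $v$, and $f_{k,v}(e)=k$ otherwise. $G$ is strongly $k$-edge-orientable if $G$ is $f_{k,v}$-edge-orientable for every $v\in V(G)$. *)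

(* Finite simple graphs as symmetric irreflexive relations. *)
From mathcomp Require Import all_boot.
Set Implicit Arguments. Unset Strict Implicit. Unset Printing Implicit Defensive.

Section Digraphs.
Variable X : finType.

Definition is_orientation (h : rel X) (arc : rel X) : Prop :=
  (forall x y, arc x y -> h x y) /\ (forall x y, h x y -> arc x y || arc y x).

Definition is_kernel_in (arc : rel X) (A S : {set X}) : Prop :=
  S \subset A /\
  (forall x y, x \in S -> y \in S -> ~~ arc x y) /\
  (forall x, x \in A -> x \notin S -> exists2 y, y \in S & arc x y).

Definition kernel_perfect (arc : rel X) : Prop :=
  forall A : {set X}, exists S : {set X}, is_kernel_in arc A S.

Definition outdeg (arc : rel X) (x : X) : nat := #|[set y | arc x y]|.

Definition f_kernel_perfect_orientation (h : rel X) (f : X -> nat) (arc : rel X) :=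
  [/\ is_orientation h arc, kernel_perfect arc &
      forall x, 1 + outdeg arc x <= f x].
End Digraphs.

Section Graphs.
Variable V : finType.
Variable adj : rel V.

Definition deg (v : V) : nat := #|[set u | adj v u]|.
Definition maxdeg : nat := \max_(v : V) deg v.

Definition bipartite : Prop :=
  exists c : V -> bool, forall u v, adj u v -> c u != c v.

Definition is_edge (e : {set V}) : bool := [exists u, exists v, adj u v && (e == [set u; v])].
Definition edge := {e : {set V} | is_edge e}.

Definition line_adj : rel edge :=
  fun e1 e2 => (e1 != e2) && [exists w, (w \in val e1) && (w \in val e2)].

Definition f_edge_orientable (f : edge -> nat) : Prop :=
  exists arc : rel edge, f_kernel_perfect_orientation line_adj f arc.

Definition f_kv (k : nat) (v : V) : edge -> nat :=
  fun e => if v \in val e then deg v else k.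

Definition strongly_edge_orientable (k : nat) : Prop :=
  forall v : V, f_edge_orientable (f_kv k v).
End Graphs.

From mathcomp Require Import all_boot perm zify.
Set Implicit Arguments. Unset Strict Implicit. Unset Printing Implicit Defensive.

(* Colour the edges of G properly with Delta colours (Koenig's theorem, via Kempe
   chains) and rank each edge by its colour, the colours used at v being moved
   below all others if v lies on the a-side of the bipartition and above them
   otherwise.  In L(G), let an edge point to the edges sharing an end with it that
   this end prefers: an a-end prefers higher rank, a b-end lower rank.  A kernel of
   such an orientation is a stable matching, so Gale-Shapley makes it
   kernel-perfect.  Properness of the colouring makes the colours of e and of its
   out-neighbours pairwise distinct, so outdeg e < Delta; when e contains v the
   choice of ranks forces all these colours to be used at v, so outdeg e < deg v. *)

Section StableArc.
Variables (E A B : finType) (a : E -> A) (b : E -> B) (r : E -> nat).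

Definition stable_arc : rel E := fun e e' =>
  ((a e == a e') && (r e < r e')) || ((b e == b e') && (r e' < r e)).

Lemma stable_arc_irr : irreflexive stable_arc.
Proof. by move=> e; rewrite /stable_arc ltnn !andbF. Qed.

Lemma stable_arc_ends e e' : stable_arc e e' -> (a e == a e') || (b e == b e').
Proof. by case/orP=> /andP[-> _]; rewrite ?orbT. Qed.

Hypothesis ra : forall e e', a e = a e' -> r e = r e' -> e = e'.

Section GaleShapley.
Variable S : {set E}.

(* a-ends propose along their best remaining edge; a b-end rejects every proposal
   but its best one, and [R] collects the rejected edges. *)

Definition proposals (R : {set E}) := [set e in S :\: R |
  [forall e' in S :\: R, (a e' == a e) ==> (r e' <= r e)]].

Definition rejected (R : {set E}) := [set e in proposals R |
  [exists e' in proposals R, (b e' == b e) && (r e' < r e)]].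

Definition gs_invariant (R : {set E}) := R \subset S /\
  forall e, e \in R -> exists2 e', e' \in proposals R & (b e' == b e) && (r e' < r e).

Lemma gs_invariant0 : gs_invariant set0.
Proof. by split=> [|e]; rewrite ?sub0set ?inE. Qed.

Lemma proposals_sub R : proposals R \subset S :\: R.
Proof. by apply/subsetP=> e; rewrite inE => /andP[]. Qed.

Lemma rejected_sub R : rejected R \subset proposals R.
Proof. by apply/subsetP=> e; rewrite inE => /andP[]. Qed.

Lemma proposals_kernel R :
  gs_invariant R -> rejected R = set0 -> is_kernel_in stable_arc S (proposals R).
Proof.
move=> [_ displaced] no_rejected; split; [|split].
- exact: subset_trans (proposals_sub R) (subsetDl S R).
- move=> x y xP yP; apply/negP=> /orP[/andP[/eqP axy rxy]|/andP[/eqP bxy ryx]].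
    move: xP; rewrite inE => /andP[_ /forall_inP/(_ y)].
    by rewrite (subsetP (proposals_sub R)) // axy eqxx leqNgt rxy => /(_ isT).
  suff : x \in rejected R by rewrite no_rejected inE.
  by rewrite inE xP; apply/exists_inP; exists y; rewrite // bxy eqxx.
move=> x xS xP; case xR: (x \in R).
  have [e' e'P /andP[/eqP be' re']] := displaced x xR.
  by exists e'; rewrite // /stable_arc be' eqxx re' orbT.
pose P t := (t \in S :\: R) && (a t == a x).
have Px : P x by rewrite /P inE xR xS eqxx.
have [t /andP[tSR /eqP atx] tmax] := arg_maxnP r Px.
have tP : t \in proposals R.
  rewrite inE tSR; apply/forall_inP=> e' e'SR; apply/implyP=> /eqP ae'.
  by apply: tmax; rewrite /P e'SR ae' atx eqxx.
exists t => //; rewrite /stable_arc atx eqxx ltn_neqAle (tmax x Px : r x <= r t) andbT.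
by apply/orP; left; apply: contraNneq xP => rxt; rewrite (ra (esym atx) rxt).
Qed.

Lemma gs_invariantU R : gs_invariant R -> gs_invariant (R :|: rejected R).
Proof.
move=> [RS displaced]; split.
  rewrite subUset RS; apply: subset_trans (rejected_sub R) _.
  exact: subset_trans (proposals_sub R) (subsetDl S R).
move=> e eR'.
have [e0 e0P /andP[/eqP be0 re0]] :
    exists2 e0, e0 \in proposals R & (b e0 == b e) && (r e0 < r e).
  by case/setUP: eR' => [/displaced //|]; rewrite inE => /andP[_ /exists_inP].
pose P h := (h \in proposals R) && (b h == b e).
have Pe0 : P e0 by rewrite /P e0P be0 eqxx.
have [h /andP[hP /eqP bh] hmin] := arg_minnP r Pe0.
have hNrej : h \notin rejected R.
  rewrite inE hP; apply/exists_inP=> -[e' e'P /andP[/eqP be' re']].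
  by move: (hmin e'); rewrite /P e'P be' bh eqxx leqNgt re' => /(_ isT).
exists h; last by rewrite bh eqxx (leq_ltn_trans (hmin _ Pe0) re0).
have hSR : h \in S :\: R := subsetP (proposals_sub R) h hP.
rewrite inE in_setD in_setU (negbTE hNrej) orbF -in_setD hSR /=.
move: hP; rewrite inE => /andP[_ /forall_inP hmax]; apply/forall_inP=> e' e'SR.
by apply: hmax; move: e'SR; rewrite !in_setD in_setU negb_or => /andP[/andP[-> _] ->].
Qed.

Lemma stable_arc_kernel_in : exists K, is_kernel_in stable_arc S K.
Proof.
suff gale_shapley n R :
    #|S :\: R| <= n -> gs_invariant R -> exists K, is_kernel_in stable_arc S K.
  exact: (gale_shapley _ set0 (leqnn _) gs_invariant0).
elim: n R => [|n IH] R szR invR.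
  exists (proposals R); apply: proposals_kernel => //; apply/eqP.
  rewrite -subset0 -(_ : S :\: R = set0); last by apply/eqP; rewrite -cards_eq0 -leqn0.
  exact: subset_trans (rejected_sub R) (proposals_sub R).
have [no_rej|/set0Pn[z zrej]] := eqVneq (rejected R) set0.
  by exists (proposals R); apply: proposals_kernel.
apply: (IH (R :|: rejected R)); last exact: gs_invariantU.
rewrite -ltnS (leq_trans _ szR) // proper_card //; apply/properP; split.
  by apply/subsetP=> x; rewrite !inE negb_or => /andP[/andP[-> _] ->].
exists z; last by rewrite in_setD in_setU zrej orbT.
by move: zrej; rewrite !inE => /andP[/andP[/andP[-> ->]]].
Qed.
End GaleShapley.

Lemma kernel_perfect_stable_arc : kernel_perfect stable_arc.
Proof. exact: stable_arc_kernel_in. Qed.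

Hypothesis rb : forall e e', b e = b e' -> r e = r e' -> e = e'.

Lemma stable_arc_total e e' :
  e != e' -> (a e == a e') || (b e == b e') -> stable_arc e e' || stable_arc e' e.
Proof.
move=> ne ends; have : r e != r e'.
  apply: contraNneq ne => req; apply/eqP.
  by case/orP: ends => /eqP same; [exact: ra | exact: rb].
rewrite /stable_arc neq_ltn.
by case/orP: ends => /eqP ->; rewrite eqxx /= => /orP[] ->; rewrite ?orbT.
Qed.

Lemma stable_arc_rank_inj e : {in e |: [set e' | stable_arc e e'] &, injective r}.
Proof.
move=> x y; rewrite !inE /stable_arc.
case/predU1P=> [->|/orP[]/andP[/eqP sx ltx]];
  case/predU1P=> [->|/orP[]/andP[/eqP sy lty]] //; try lia; move=> rxy.
- by apply: ra; rewrite // -sx -sy.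
- by apply: rb; rewrite // -sx -sy.
Qed.
End StableArc.

Section EdgeColouring.
Variables (E A B : finType) (a : E -> A) (b : E -> B) (D : nat).

Definition proper_on (F : {set E}) (col : E -> 'I_D) :=
  {in F &, forall e e', a e = a e' -> col e = col e' -> e = e'} /\
  {in F &, forall e e', b e = b e' -> col e = col e' -> e = e'}.

Lemma exists_free_colour (T : finType) (p : E -> T) (F : {set E}) (col : E -> 'I_D) e0 :
  #|[set e | p e == p e0]| <= D -> e0 \notin F ->
  exists al : 'I_D, forall e, e \in F -> p e = p e0 -> col e != al.
Proof.
move=> degD e0F; pose used := [set col e | e in F & p e == p e0].
have : ~~ ([set: 'I_D] \subset used).
  apply/negP=> /subset_leq_card; rewrite cardsT card_ord; apply/negP; rewrite -ltnNge.
  apply: leq_ltn_trans (leq_imset_card _ _) (leq_trans _ degD); apply: proper_card.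
  apply/properP; split; first by apply/subsetP=> e; rewrite !inE => /andP[].
  by exists e0; rewrite !inE ?eqxx // (negbTE e0F).
case/subsetPn=> al _ al_free; exists al => e eF pe; apply: contraNneq al_free => <-.
by apply/imsetP; exists e; rewrite // inE eF pe eqxx.
Qed.

Section Kempe.
Variables (F : {set E}) (col : E -> 'I_D) (e0 : E) (al be : 'I_D).
Hypothesis e0F : e0 \notin F.
Hypothesis colP : proper_on F col.
Hypothesis al_free : forall e, e \in F -> a e = a e0 -> col e != al.
Hypothesis be_free : forall e, e \in F -> b e = b e0 -> col e != be.

Definition kempe_step : rel E := fun f g => (g \in F) &&
  ((col f == al) && (col g == be) && (a f == a g) ||
   (col f == be) && (col g == al) && (b f == b g)).

(* The al/be-alternating path leaving [b e0] along its al-edge, if any: al-edges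
   are left through their a-end and be-edges through their b-end. *)
Definition kempe_chain := [set g | [exists f in F,
  [&& b f == b e0, col f == al & connect kempe_step f g]]].

Lemma kempe_chainP g : g \in kempe_chain ->
  g \in F /\ (b g = b e0 /\ col g = al \/ exists2 f, f \in kempe_chain & kempe_step f g).
Proof.
rewrite inE => /exists_inP[f fF /and3P[/eqP bf /eqP colf /connectP[p fp ->]]].
case/lastP: p fp => [_|p g' ]; first by split; [|left].
rewrite rcons_path last_rcons => /andP[fp step]; split; first by case/andP: step.
right; exists (last f p) => //; rewrite inE; apply/exists_inP; exists f => //.
by rewrite bf colf !eqxx; apply/connectP; exists p.
Qed.

Lemma kempe_chain_step f g : f \in kempe_chain -> kempe_step f g -> g \in kempe_chain.
Proof.
rewrite !inE => /exists_inP[f0 f0F /and3P[bf0 colf0 conn]] step.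
by apply/exists_inP; exists f0; rewrite // bf0 colf0 (connect_trans conn (connect1 step)).
Qed.

Lemma kempe_chain_avoids_a g : g \in kempe_chain -> a g = a e0 -> col g != be.
Proof.
move=> /kempe_chainP[gF [[_ colg]|[f /kempe_chainP[fF _] step]]] ag.
  by move: (al_free gF ag); rewrite colg eqxx.
case/andP: step => _ /orP[/andP[/andP[/eqP colf _] /eqP af]|/andP[/andP[_ /eqP colg] _]].
  by move: (al_free fF (etrans af ag)); rewrite colf eqxx.
by move: (al_free gF ag); rewrite colg eqxx.
Qed.

Lemma kempe_chain_col g : g \in kempe_chain -> (col g == al) || (col g == be).
Proof.
case/kempe_chainP=> _ [[_ ->]|[f _ /andP[_ step]]]; first by rewrite eqxx.
by case/orP: step => /andP[/andP[_ ->]]; rewrite ?orbT.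
Qed.

Lemma kempe_chain_al_neq_be g : g \in kempe_chain -> al != be.
Proof.
rewrite inE => /exists_inP[f fF /and3P[/eqP bf /eqP colf _]].
by move: (be_free fF bf); rewrite colf.
Qed.

Lemma kempe_chain_closed x y : x \in kempe_chain -> y \in F ->
  a x = a y \/ b x = b y -> col y = tperm al be (col x) -> y \in kempe_chain.
Proof.
move=> xK yF shared; have [xF from_x] := kempe_chainP xK.
have [a_inj b_inj] := colP; have /negPf al_be := kempe_chain_al_neq_be xK.
have step_xy : kempe_step x y -> y \in kempe_chain := kempe_chain_step xK.
case/orP: (kempe_chain_col xK) => /eqP colx; rewrite colx ?tpermL ?tpermR => coly.
  case: shared => same; first by apply: step_xy; rewrite /kempe_step yF colx coly same !eqxx.
  case: from_x => [[bx _]|[f fK /andP[_ /orP[]]]].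
  - by move: (be_free yF (etrans (esym same) bx)); rewrite coly eqxx.
  - by rewrite colx al_be andbF.
  case/andP=> /andP[/eqP colf _] /eqP bf.
  by rewrite -(b_inj f y) ?(etrans bf same) ?colf ?coly //; case/kempe_chainP: fK.
case: shared => same; last by apply: step_xy; rewrite /kempe_step yF colx coly same !eqxx orbT.
case: from_x => [[_ colx']|[f fK /andP[_ /orP[]]]].
- by move: al_be; rewrite -colx' colx eqxx.
- case/andP=> /andP[/eqP colf _] /eqP af.
  by rewrite -(a_inj f y) ?(etrans af same) ?colf ?coly //; case/kempe_chainP: fK.
by rewrite colx [be == al]eq_sym al_be andbF.
Qed.

Lemma memF_neq_e0 g : g \in F -> (g == e0) = false.
Proof. by apply: contraTF => /eqP->. Qed.

Definition kempe_recolour g :=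
  if g == e0 then al else if g \in kempe_chain then tperm al be (col g) else col g.

Lemma kempe_recolour_F x y : x \in F -> y \in F -> a x = a y \/ b x = b y ->
  kempe_recolour x = kempe_recolour y -> col x = col y.
Proof.
move=> xF yF shared; rewrite /kempe_recolour !memF_neq_e0 //.
have shared' : a y = a x \/ b y = b x by case: shared => ->; [left|right].
case xK: (x \in kempe_chain); case yK: (y \in kempe_chain) => //.
- exact: perm_inj.
- move=> /esym coly; by rewrite (kempe_chain_closed xK yF shared coly) in yK.
- move=> coly; by rewrite (kempe_chain_closed yK xF shared' coly) in xK.
Qed.

Lemma kempe_recolour_free_a e : e \in F -> a e = a e0 -> kempe_recolour e != al.
Proof.
move=> eF ea; rewrite /kempe_recolour memF_neq_e0 //; case: ifP => [eK|_]; last exact: al_free.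
apply: contra_neq (kempe_chain_avoids_a eK ea).
by move/(congr1 (tperm al be)); rewrite tpermK tpermL.
Qed.

Lemma kempe_recolour_free_b e : e \in F -> b e = b e0 -> kempe_recolour e != al.
Proof.
move=> eF eb; rewrite /kempe_recolour memF_neq_e0 //; case: ifP => [_|eK].
  apply: contra_neq (be_free eF eb).
  by move/(congr1 (tperm al be)); rewrite tpermK tpermL.
apply: contraFneq eK => cole; rewrite inE; apply/exists_inP; exists e => //.
by rewrite eb cole !eqxx connect0.
Qed.

Lemma proper_kempe_recolour : proper_on (e0 |: F) kempe_recolour.
Proof.
have [a_inj b_inj] := colP; have e0_al : kempe_recolour e0 = al by rewrite /kempe_recolour eqxx.
split=> e e'; rewrite !inE => /predU1P[->|eF] /predU1P[->|e'F] // same; rewrite ?e0_al.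
- by move=> /esym/eqP; rewrite (negPf (kempe_recolour_free_a e'F (esym same))).
- by move=> /eqP; rewrite (negPf (kempe_recolour_free_a eF same)).
- by move/kempe_recolour_F => /(_ eF e'F (or_introl same)); apply: a_inj.
- by move=> /esym/eqP; rewrite (negPf (kempe_recolour_free_b e'F (esym same))).
- by move=> /eqP; rewrite (negPf (kempe_recolour_free_b eF same)).
- by move/kempe_recolour_F => /(_ eF e'F (or_intror same)); apply: b_inj.
Qed.
End Kempe.

Hypothesis degA : forall x, #|[set e | a e == x]| <= D.
Hypothesis degB : forall y, #|[set e | b e == y]| <= D.

Lemma proper_on_setU1 (F : {set E}) (col : E -> 'I_D) e0 :
  e0 \notin F -> proper_on F col -> exists col', proper_on (e0 |: F) col'.
Proof.
move=> e0F colP.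
have [al al_free] := exists_free_colour col (degA (a e0)) e0F.
have [be be_free] := exists_free_colour col (degB (b e0)) e0F.
by exists (kempe_recolour F col e0 al be); apply: proper_kempe_recolour.
Qed.

Lemma bipartite_edge_colouring : exists col : E -> 'I_D, proper_on setT col.
Proof.
suff col_on n (F : {set E}) : #|F| = n -> exists col : E -> 'I_D, proper_on F col.
  exact: col_on.
elim: n F => [|n IH] F cardF.
  have D_gt0 (e : E) : 0 < D.
    by apply: leq_trans _ (degA (a e)); rewrite card_gt0; apply/set0Pn; exists e; rewrite inE.
  exists (fun e => Ordinal (D_gt0 e)).
  by move/eqP: cardF; rewrite cards_eq0 => /eqP->; split=> ?; rewrite inE.
have /set0Pn[e0 e0F] : F != set0 by rewrite -card_gt0 cardF.
have [|col colP] := IH (F :\ e0); first by move: cardF; rewrite (cardsD1 e0) e0F => -[].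
have e0F' : e0 \notin F :\ e0 by rewrite !inE eqxx.
by have := proper_on_setU1 e0F' colP; rewrite setD1K.
Qed.
End EdgeColouring.

Section BipartiteOrientation.
Variables (V : finType) (adj : rel V) (c : V -> bool) (v : V).
Hypothesis adj_sym : symmetric adj.
Hypothesis c_proper : forall u w, adj u w -> c u != c w.
Local Notation edge := (edge adj).
Local Notation D := (maxdeg adj).

Definition end_a (e : edge) := odflt v [pick x in val e | c x].
Definition end_b (e : edge) := odflt v [pick x in val e | ~~ c x].

Lemma pick_pair (u w : V) (P : pred V) :
  P u -> ~~ P w -> [pick x in [set u; w] | P x] = Some u.
Proof.
move=> Pu Pw; case: pickP => [x /andP[]|/(_ u)]; last by rewrite !inE eqxx Pu.
by rewrite !inE => /orP[/eqP -> //|/eqP ->]; rewrite (negbTE Pw).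
Qed.

Lemma edge_ends e :
  [/\ val e = [set end_a e; end_b e], c (end_a e), ~~ c (end_b e) & adj (end_a e) (end_b e)].
Proof.
rewrite /end_a /end_b; case: e => s /= /existsP[u /existsP[w /andP[uw /eqP ->]]].
wlog cu : u w uw / c u.
  move=> oriented; case cu: (c u); first exact: oriented.
  rewrite setUC; apply: oriented; first by rewrite adj_sym.
  by have := c_proper uw; rewrite cu; case: (c w).
have cw : ~~ c w by have := c_proper uw; rewrite cu; case: (c w).
rewrite (pick_pair (P := c) cu cw) setUC (pick_pair (P := fun x => ~~ c x)) ?negbK //= setUC.
by rewrite cu cw uw.
Qed.

Lemma mem_edge (e : edge) w : (w \in val e) = (w == end_a e) || (w == end_b e).
Proof. by case: (edge_ends e) => -> _ _ _; rewrite !inE. Qed.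

Lemma end_a_neq_b (e e' : edge) : end_a e != end_b e'.
Proof.
by case: (edge_ends e) (edge_ends e') => _ ca _ _ [_ _ cb _]; apply: contraNneq cb => <-.
Qed.

Lemma edge_ends_inj (e e' : edge) : end_a e = end_a e' -> end_b e = end_b e' -> e = e'.
Proof.
move=> ea eb; apply: val_inj.
by case: (edge_ends e) (edge_ends e') => -> _ _ _ [-> _ _ _]; rewrite ea eb.
Qed.

Lemma line_adjE (e e' : edge) :
  @line_adj V adj e e' = (e != e') && ((end_a e == end_a e') || (end_b e == end_b e')).
Proof.
rewrite /line_adj; congr (_ && _); apply/existsP/idP => [[w]|/orP[]/eqP same].
- rewrite !mem_edge => /andP[] /orP[]/eqP-> /orP[]/eqP same; rewrite ?same ?eqxx ?orbT //.
  + by move: (end_a_neq_b e e'); rewrite same eqxx.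
  + by move: (end_a_neq_b e' e); rewrite same eqxx.
- by exists (end_a e); rewrite !mem_edge same !eqxx.
- by exists (end_b e); rewrite !mem_edge same !eqxx !orbT.
Qed.

Lemma card_fibre_a x : #|[set e | end_a e == x]| <= deg adj x.
Proof.
rewrite -(@card_in_imset _ _ end_b); last first.
  by move=> e e'; rewrite !inE => /eqP ea /eqP ea' eb; apply: edge_ends_inj; rewrite // ea ea'.
apply/subset_leq_card/subsetP=> u /imsetP[e]; rewrite !inE => /eqP <- ->.
by case: (edge_ends e).
Qed.

Lemma card_fibre_b y : #|[set e | end_b e == y]| <= deg adj y.
Proof.
rewrite -(@card_in_imset _ _ end_a); last first.
  by move=> e e'; rewrite !inE => /eqP eb /eqP eb' ea; apply: edge_ends_inj; rewrite // eb eb'.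
apply/subset_leq_card/subsetP=> u /imsetP[e]; rewrite !inE => /eqP <- ->.
by rewrite adj_sym; case: (edge_ends e).
Qed.

Lemma card_edges_at u : #|[set e : edge | u \in val e]| <= deg adj u.
Proof.
case cu: (c u); [apply: leq_trans (card_fibre_a u) | apply: leq_trans (card_fibre_b u)];
  apply/subset_leq_card/subsetP=> e; rewrite !inE mem_edge => /orP[]/eqP ue;
  rewrite ?ue ?eqxx //; have [_ ca cb _] := edge_ends e.
- by rewrite -ue cu in cb.
- by rewrite -ue cu in ca.
Qed.

Variable col : edge -> 'I_D.
Hypothesis col_proper : proper_on end_a end_b setT col.

Definition colours_at_v := [set col e | e in [set e : edge | v \in val e]].

Definition rank (g : 'I_D) : nat :=
  if (g \in colours_at_v) == c v then nat_of_ord g else g + D.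

Definition edge_rank (e : edge) := rank (col e).

Definition orient : rel edge := stable_arc end_a end_b edge_rank.

Lemma rank_lt_D g : (rank g < D) = ((g \in colours_at_v) == c v).
Proof. by rewrite /rank; case: ifP => _; rewrite ?ltn_ord // ltnNge leq_addl. Qed.

Lemma rank_inj : injective rank.
Proof.
move=> g g'; rewrite /rank; have := ltn_ord g; have := ltn_ord g'.
by do 2 case: ifP => _; move=> *; apply: ord_inj; lia.
Qed.

Lemma col_at_v (e : edge) : v \in val e -> col e \in colours_at_v.
Proof. by move=> ve; apply: imset_f; rewrite inE. Qed.

Lemma orient_rank_inj_a (e e' : edge) :
  end_a e = end_a e' -> edge_rank e = edge_rank e' -> e = e'.
Proof. by move=> same /rank_inj; apply: col_proper.1; rewrite ?inE. Qed.

Lemma orient_rank_inj_b (e e' : edge) :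
  end_b e = end_b e' -> edge_rank e = edge_rank e' -> e = e'.
Proof. by move=> same /rank_inj; apply: col_proper.2; rewrite ?inE. Qed.

Lemma orient_is_orientation : is_orientation (@line_adj V adj) orient.
Proof.
split=> e e'; rewrite line_adjE.
  move=> arc; rewrite (stable_arc_ends arc) andbT.
  by apply: contraTneq arc => ->; rewrite /orient stable_arc_irr.
by case/andP=> ne; apply: stable_arc_total orient_rank_inj_a orient_rank_inj_b _ _ ne.
Qed.

Lemma kernel_perfect_orient : kernel_perfect orient.
Proof. exact: kernel_perfect_stable_arc orient_rank_inj_a. Qed.

Lemma outdeg_orient_lt (T : {set 'I_D}) (e : edge) :
  col e \in T -> (forall y, orient e y -> col y \in T) -> outdeg orient e < #|T|.
Proof.
move=> Te Tout; pose N := e |: [set y | orient e y].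
have cardN : #|N| = (outdeg orient e).+1 by rewrite cardsU1 inE /orient stable_arc_irr.
have col_inj : {in N &, injective col}.
  move=> x y xN yN /(congr1 rank).
  exact: (stable_arc_rank_inj orient_rank_inj_a orient_rank_inj_b xN yN).
rewrite -cardN -(card_in_imset col_inj); apply/subset_leq_card/subsetP=> g /imsetP[y].
by rewrite !inE => /predU1P[->|/Tout yT] ->.
Qed.

Lemma orient_colours_at_v (e : edge) :
  v \in val e -> forall y, orient e y -> col y \in colours_at_v.
Proof.
move=> ve y; have colv := col_at_v ve; have [_ ca cb _] := edge_ends e.
rewrite /orient /stable_arc /edge_rank.
case cv: (c v); move: ve; rewrite mem_edge => /orP[]/eqP ve; rewrite -?ve ?cv // in ca cb.
- case/orP=> /andP[/eqP ey lt]; first by apply: col_at_v; rewrite mem_edge -ey -ve eqxx.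
  have : rank (col y) < D by rewrite (ltn_trans lt) // rank_lt_D colv cv.
  by rewrite rank_lt_D cv => /eqP.
- case/orP=> /andP[/eqP ey lt]; last by apply: col_at_v; rewrite mem_edge -ey -ve eqxx orbT.
  have : ~~ (rank (col y) < D).
    by rewrite -leqNgt (leq_trans _ (ltnW lt)) // leqNgt rank_lt_D colv cv.
  by rewrite rank_lt_D cv; case: (_ \in _).
Qed.

Lemma outdeg_orient (e : edge) : 1 + outdeg orient e <= @f_kv V adj D v e.
Proof.
rewrite /f_kv add1n; case: ifP => ve.
  apply: leq_trans (outdeg_orient_lt (col_at_v ve) (orient_colours_at_v ve)) _.
  exact: leq_trans (leq_imset_card _ _) (card_edges_at v).
by rewrite -[D]card_ord -cardsT; apply: outdeg_orient_lt => *; rewrite inE.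
Qed.
End BipartiteOrientation.

Theorem mainTheorem13 (V : finType) (adj : rel V) :
  symmetric adj -> irreflexive adj -> bipartite adj ->
  strongly_edge_orientable adj (maxdeg adj).
Proof.
(* Irreflexivity is implied by bipartiteness. *)
move=> adj_sym _ [c c_proper] v.
have deg_max u : deg adj u <= maxdeg adj := leq_bigmax u.
have [col col_proper] := bipartite_edge_colouring
  (fun x => leq_trans (card_fibre_a v adj_sym c_proper x) (deg_max x))
  (fun y => leq_trans (card_fibre_b v adj_sym c_proper y) (deg_max y)).
exists (orient c v col); split.
- exact: orient_is_orientation.
- exact: kernel_perfect_orient.
- exact: outdeg_orient.
Qed.
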